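(* Let $n\ge1$, $0\le k\le n$, let $T_1,\dots,T_n$ be i.i.d. with continuous distribution function $F$, with order statistics $T_{(1)}\le\dots\le T_{(n)}$ and conventions $T_{(0)}=-\infty$, $T_{(n+1)}=+\infty$, $F(-\infty)=0$, $F(+\infty)=1$. Define $y_0=1-F(T_{(k)})$, $z_0=1-F(T_{(k+1)})$, $y_1=F(T_{(k+1)})$, $z_1=F(T_{(k)})$. Then for every $\varepsilon>0$: $$P\Big(y_0>\tfrac{n-k+1}{n+1}+\varepsilon\Big)\le e^{-2n(\varepsilon+\frac{k}{n(n+1)})^2},\qquad P\Big(z_0<\tfrac{n-k}{n+1}-\varepsilon\Big)\le e^{-2n(\varepsilon+\frac{n-k}{n(n+1)})^2},$$ $$P\Big(y_1>\tfrac{k+1}{n+1}+\varepsilon\Big)\le e^{-2n(\varepsilon+\frac{n-k}{n(n+1)})^2},\qquad P\Big(z_1<\tfrac{k}{n+1}-\varepsilon\Big)\le e^{-2n(\varepsilon+\frac{k}{n(n+1)})^2}.$$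
   Context: In the paper these quantities bound the false positive rate (using the class-0 sample, $y_0,z_0$) and false negative rate (using the class-1 sample, $y_1,z_1$) of the THORS threshold lying between consecutive order statistics $T_{(k)}$ and $T_{(k+1)}$. *)

From HB Require Import structures.
From mathcomp Require Import all_boot all_order all_algebra.
From mathcomp Require Import all_classical all_reals all_analysis.
Set Implicit Arguments. Unset Strict Implicit. Unset Printing Implicit Defensive.
Import Order.TTheory GRing.Theory Num.Theory numFieldNormedType.Exports.
Local Open Scope classical_set_scope.
Local Open Scope ring_scope.

Definition mutually_independent d (T : measurableType d) (R : realType)
  (P : probability T R) (n : nat) (X : 'I_n -> {RV P >-> R}) : Prop :=
  forall (J : {set 'I_n}) (B : 'I_n -> set R),
    (forall i, measurable (B i)) ->
    P (\bigcap_(i in [set i | i \in J]) (X i @^-1` B i)) =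
    (\prod_(i in J) P (X i @^-1` B i))%E.

(* Order statistics of the sample (X_1(w),...,X_n(w)): the values sorted
   increasingly; order_stat X j w = T_(j) for 1 <= j <= n. *)
Definition sorted_sample d (T : measurableType d) (R : realType)
  (P : probability T R) (n : nat) (X : 'I_n -> {RV P >-> R}) (w : T) : seq R :=
  sort <=%R [seq X i w | i <- enum 'I_n].

Definition order_stat d (T : measurableType d) (R : realType)
  (P : probability T R) (n : nat) (X : 'I_n -> {RV P >-> R}) (j : nat) (w : T) : R :=
  nth 0 (sorted_sample X w) j.-1.

(* F(T_(j)) with the conventions T_(0) = -oo, T_(n+1) = +oo,
   F(-oo) = 0, F(+oo) = 1. *)
Definition F_order_stat d (T : measurableType d) (R : realType)
  (P : probability T R) (n : nat) (X : 'I_n -> {RV P >-> R}) (F : R -> R)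
  (j : nat) (w : T) : R :=
  if j == 0%N then 0 else if j == n.+1 then 1 else F (order_stat X j w).

From HB Require Import structures.
From mathcomp Require Import all_boot all_order all_algebra.
From mathcomp Require Import all_classical all_reals all_analysis.
From mathcomp Require Import ring lra zify.

Set Implicit Arguments.
Unset Strict Implicit.
Unset Printing Implicit Defensive.

Import Order.TTheory GRing.Theory Num.Theory numFieldNormedType.Exports.
Local Open Scope classical_set_scope.
Local Open Scope ring_scope.

(* The event F(T_(k)) < a says that at least k of the n independent
   variables F(X_i) fall below a, and by continuity of F each does so with
   probability at most a.  A Chernoff argument built on Hoeffding's lemma,
   E exp(s (B - p)) <= exp(s^2 / 8) for a Bernoulli(p) variable B, then bounds
   the probability of this count exceeding its mean.  The upper tail
   F(T_(k+1)) > b is the same argument applied to the number of X_i with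
   F(X_i) > b, and y0, z0 are the complements 1 - z1, 1 - y1. *)

Section hoeffding_lemma.
Context {R : realType}.
Implicit Types p s x : R.

Definition bernoulli_mgf p s := 1 - p + p * expR s.

Lemma bernoulli_mgf_gt0 p s : 0 <= p <= 1 -> 0 < bernoulli_mgf p s.
Proof.
move=> /andP[p0 p1]; have e0 := expR_gt0 s; rewrite /bernoulli_mgf.
have [p_small|p_large] := lerP p (1/2); first by have := mulr_ge0 p0 (ltW e0); lra.
by have := mulr_gt0 (_ : 0 < p) e0; lra.
Qed.

Lemma is_derive_bernoulli_mgf p x :
  is_derive x 1 (bernoulli_mgf p) (p * expR x).
Proof.
have -> : bernoulli_mgf p = cst (1 - p) + (cst p * expR) by apply/funext.
by apply: is_derive_eq; rewrite /GRing.scale /=; lra.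
Qed.

Definition hoeffding_gap p s := s * p + s ^+ 2 / 8 - ln (bernoulli_mgf p s).

Definition hoeffding_gap' p s := s / 4 + p - p * expR s / bernoulli_mgf p s.

Lemma ge0_of_derive_ge0 (f f' : R -> R) s :
  (forall x, is_derive x 1 f (f' x)) -> (forall x, 0 < x -> 0 <= f' x) ->
  f 0 = 0 -> 0 <= s -> 0 <= f s.
Proof.
move=> df f'_ge0 f0 s0.
have fd x : derivable f x 1 by have [] := df x.
have f'E x : f^`()%classic x = f' x by rewrite derive1E; have [_ ->] := df x.
have f'_ge0_itv x : x \in `]0, s[ -> 0 <= f^`()%classic x.
  by rewrite in_itv /= f'E => /andP[x0 _]; exact: f'_ge0.
have fc : {within `[0, s], continuous f}.
  by apply: derivable_within_continuous => x _; exact: fd.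
rewrite -f0; exact: (ger0_derive1_ndecr (fun x _ => fd x) f'_ge0_itv fc (lexx 0) s0 (lexx s)).
Qed.

Lemma is_derive_hoeffding_gap' p x : 0 <= p <= 1 ->
  is_derive x 1 (hoeffding_gap' p)
    (1 / 4 - p * (1 - p) * expR x / bernoulli_mgf p x ^+ 2).
Proof.
move=> p01; have D0 := lt0r_neq0 (bernoulli_mgf_gt0 x p01).
have dV := is_deriveV D0 (is_derive_bernoulli_mgf p x).
have -> : hoeffding_gap' p =
    id * cst 4^-1 + cst p - (cst p * expR) * (fun s => (bernoulli_mgf p s)^-1) by apply/funext.
apply: is_derive_eq; rewrite /GRing.scale /=.
rewrite (_ : (cst p * expR) x = p * expR x) //.
by move: D0; rewrite /bernoulli_mgf => D0; field.
Qed.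

Lemma hoeffding_gap'_ge0 p s : 0 <= p <= 1 -> 0 <= s -> 0 <= hoeffding_gap' p s.
Proof.
move=> p01 s0.
apply: (ge0_of_derive_ge0 (fun x => is_derive_hoeffding_gap' x p01)) s0 => [x _|].
  have D0 := bernoulli_mgf_gt0 x p01.
  rewrite subr_ge0 ler_pdivrMr ?exprn_gt0 //.
  (* AM-GM: ab <= (a+b)^2/4 with a = 1 - p, b = p e^x *)
  have : 0 <= (1 - p - p * expR x) ^+ 2 by apply: sqr_ge0.
  by move: D0; rewrite /bernoulli_mgf !expr2; nra.
by rewrite /hoeffding_gap' /bernoulli_mgf expR0 mulr1 mul0r add0r subrK divr1 subrr.
Qed.

Lemma is_derive_hoeffding_gap p x : 0 <= p <= 1 ->
  is_derive x 1 (hoeffding_gap p) (hoeffding_gap' p x).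
Proof.
move=> p01; have D0 := lt0r_neq0 (bernoulli_mgf_gt0 x p01).
have dln : is_derive x 1 (@ln R \o bernoulli_mgf p) ((bernoulli_mgf p x)^-1 * (p * expR x)).
  apply: is_derive1_comp; last exact: is_derive_bernoulli_mgf.
  exact/is_derive1_ln/bernoulli_mgf_gt0.
have -> : hoeffding_gap p =
    id * cst p + id ^+ 2 * cst 8^-1 - (@ln R \o bernoulli_mgf p) by apply/funext.
apply: is_derive_eq; rewrite /hoeffding_gap' /GRing.scale /=.
by field.
Qed.

Lemma bernoulli_mgf_le p s : 0 <= p <= 1 -> 0 <= s ->
  bernoulli_mgf p s <= expR (s * p + s ^+ 2 / 8).
Proof.
move=> p01 s0.
have gap_ge0 : 0 <= hoeffding_gap p s.
  apply: (ge0_of_derive_ge0 (fun x => is_derive_hoeffding_gap x p01)) s0.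
    by move=> x /ltW; exact: hoeffding_gap'_ge0.
  by rewrite /hoeffding_gap /bernoulli_mgf expR0 mulr1 subrK ln1 mul0r expr0n /= mul0r !addr0 subr0.
rewrite -[X in X <= _]lnK ?posrE ?bernoulli_mgf_gt0 // ler_expR.
by rewrite -subr_ge0.
Qed.

End hoeffding_lemma.

Section bernoulli_tail.
Context {R : realType} (n : nat) (p : 'I_n -> R).
Hypothesis p01 : forall i, 0 <= p i <= 1.

Definition bernoulli_weight (f : {ffun 'I_n -> bool}) : R :=
  \prod_i (if f i then p i else 1 - p i).

Definition bernoulli_tail (m : nat) : R :=
  \sum_(f : {ffun 'I_n -> bool} | (m <= \sum_i (f i : nat))%N) bernoulli_weight f.

Lemma bernoulli_weight_ge0 f : 0 <= bernoulli_weight f.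
Proof. by apply: prodr_ge0 => i _; case: (f i); have := p01 i; lra. Qed.

Lemma chernoff_bernoulli_tail (m : nat) (a s : R) :
  (forall i, p i <= a) -> 0 <= s ->
  bernoulli_tail m <= expR (- s * m%:R + n%:R * (s * a + s ^+ 2 / 8)).
Proof.
move=> pa s0.
pose tilt (f : {ffun 'I_n -> bool}) := expR (s * ((\sum_i (f i : nat))%:R - m%:R)).
pose G i (b : bool) := if b then p i * expR s else 1 - p i.
have markov : bernoulli_tail m <= \sum_f bernoulli_weight f * tilt f.
  rewrite [X in _ <= X](bigID (fun f : {ffun 'I_n -> bool} => (m <= \sum_i (f i : nat))%N)) /=.
  rewrite -[X in X <= _]addr0; apply: lerD.
    apply: ler_sum => f hf; rewrite -[X in X <= _]mulr1.
    apply: ler_wpM2l; first exact: bernoulli_weight_ge0.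
    rewrite -[X in X <= expR _]expR0 ler_expR.
    by apply: mulr_ge0 => //; rewrite subr_ge0 ler_nat.
  by rewrite sumr_ge0 // => f _; rewrite mulr_ge0 ?expR_ge0 ?bernoulli_weight_ge0.
have tiltE f : bernoulli_weight f * tilt f = expR (- s * m%:R) * \prod_i G i (f i).
  rewrite /tilt mulrBr expRD natr_sum mulr_sumr expR_sum mulNr mulrA [RHS]mulrC.
  congr (_ * _); rewrite -big_split /=.
  by apply: eq_bigr => i _; rewrite /G; case: (f i); rewrite ?mulr1 ?mulr0 ?expR0 ?mulr1.
apply: le_trans markov _; under eq_bigr do rewrite tiltE.
(* the sum over outcomes of the product factorises into the product of the mgfs *)
rewrite -mulr_sumr -bigA_distr_bigA /= expRD; apply: ler_wpM2l; first exact: expR_ge0.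
have -> : n%:R * (s * a + s ^+ 2 / 8) = \sum_(i < n) (s * a + s ^+ 2 / 8).
  by rewrite sumr_const card_ord mulr_natl.
rewrite expR_sum.
apply: ler_prod => i _; rewrite big_bool /G /= addrC.
have mgf_le := bernoulli_mgf_le (p01 i) s0.
apply/andP; split; first exact/ltW/bernoulli_mgf_gt0.
by apply: le_trans mgf_le _; rewrite ler_expR lerD2r ler_wpM2l.
Qed.

Lemma hoeffding_bernoulli_tail (m : nat) (a tau : R) :
  (forall i, p i <= a) -> 0 <= tau -> m%:R = n%:R * (a + tau) ->
  bernoulli_tail m <= expR (- (2 * n%:R) * tau ^+ 2).
Proof.
move=> pa tau0 mE.
have s0 : 0 <= 4 * tau by exact: mulr_ge0.
apply: le_trans (chernoff_bernoulli_tail m pa s0) _.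
by rewrite mE ler_expR le_eqVlt; apply/orP; left; apply/eqP; field.
Qed.

End bernoulli_tail.

Lemma measure_bigsetU_le d (T : measurableType d) (R : realType)
  (mu : {measure set T -> \bar R}) (I : Type) (r : seq I) (P : pred I)
  (F : I -> set T) : (forall i, measurable (F i)) ->
  (mu (\big[setU/set0]_(i <- r | P i) F i) <= \sum_(i <- r | P i) mu (F i))%E.
Proof.
move=> mF; elim: r => [|i r IH]; first by rewrite !big_nil measure0.
rewrite !big_cons; case: (P i) => //.
apply: le_trans (measureU2 _ (mF i) _) (leeD2l _ IH).
by apply: bigsetU_measurable => j _; exact: mF.
Qed.

Lemma probability_fine01 d (T : measurableType d) (R : realType)
  (P : probability T R) (A : set T) : measurable A -> 0 <= fine (P A) <= 1.
Proof.
move=> mA; have fA : P A \is a fin_num by rewrite fin_num_measure.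
by rewrite -!lee_fin fineK // measure_ge0 probability_le1.
Qed.

Section independent_count.
Context d (T : measurableType d) (R : realType) (P : probability T R).
Context (n : nat) (X : 'I_n -> {RV P >-> R}) (p : pred R).
Hypotheses (X_indep : mutually_independent X) (mp : measurable [set x | p x]).

Let B := [set x | p x].

Let pB i := fine (P (X i @^-1` B)).

Let mXB i : measurable (X i @^-1` B).
Proof. exact: measurable_funPTI. Qed.

Lemma independent_count_tail (m : nat) :
  (P [set w | (m <= \sum_(i < n) (p (X i w) : nat))%N]
     <= (bernoulli_tail pB m)%:E)%E.
Proof.
pose Bf (f : {ffun 'I_n -> bool}) i := if f i then B else ~` B.
pose E f := \bigcap_(i in [set i | i \in [set: 'I_n]%SET]) (X i @^-1` Bf f i).
have mBf f i : measurable (Bf f i) by rewrite /Bf; case: (f i); last exact: measurableC.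
have mE f : measurable (E f).
  apply: fin_bigcap_measurable; first exact: finite_finset.
  by move=> i _; exact: measurable_funPTI.
have PE f : P (E f) = (bernoulli_weight pB f)%:E.
  rewrite /E (X_indep [set: 'I_n]%SET (mBf f)) -prodEFin.
  apply: eq_big => [i|i _]; first by rewrite inE.
  have fin : P (X i @^-1` B) \is a fin_num by rewrite fin_num_measure.
  rewrite /Bf /pB; case: (f i); first by rewrite fineK.
  by rewrite preimage_setC probability_setC ?EFinB ?fineK //; exact: mXB.
rewrite [X in P X](_ : _ =
    \big[setU/set0]_(f : {ffun 'I_n -> bool} | (m <= \sum_i (f i : nat))%N) E f).
  apply: le_trans (measure_bigsetU_le _ _ _ mE) _.
  by rewrite (eq_bigr _ (fun f _ => PE f)) sumEFin.
rewrite -bigcup_seq_cond; apply/seteqP; split => w /=.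
- move=> hw; exists [ffun i => p (X i w)].
    by rewrite /= mem_index_enum /=; under eq_bigr do rewrite ffunE.
  by move=> i _; rewrite /Bf ffunE /=; case: ifPn => /= [|/negP].
- move=> [f /andP[_ hf]] hw.
  suff fE i : p (X i w) = f i by under eq_bigr do rewrite fE.
  have := hw i; rewrite /= inE => /(_ isT); rewrite /Bf.
  by case: (f i) => [|/negP/negbTE].
Qed.

Lemma hoeffding_independent_count (m : nat) (a tau : R) :
  (forall i, fine (P (X i @^-1` [set x | p x])) <= a) -> 0 <= tau ->
  m%:R = n%:R * (a + tau) ->
  (P [set w | (m <= \sum_(i < n) (p (X i w) : nat))%N]
     <= (expR (- (2 * n%:R) * tau ^+ 2))%:E)%E.
Proof.
move=> pBa tau0 mE; apply: le_trans (independent_count_tail m) _.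
rewrite lee_fin; apply: hoeffding_bernoulli_tail pBa tau0 mE.
by move=> i; exact: probability_fine01.
Qed.

End independent_count.

Lemma continuous_measurable_preimage (R : realType) (F : R -> R) (Y : set R) :
  continuous F -> measurable Y -> measurable (F @^-1` Y).
Proof.
move=> cF mY; rewrite -[_ @^-1` _]setTI.
exact: measurable_realfun.continuous_measurable_fun.
Qed.

Lemma measurable_continuous_lt (R : realType) (F : R -> R) (a : R) :
  continuous F -> measurable [set x | F x < a].
Proof.
rewrite -[X in measurable X]/(F @^-1` `]-oo, a[) => cF.
exact: continuous_measurable_preimage.
Qed.

Lemma measurable_continuous_gt (R : realType) (F : R -> R) (a : R) :
  continuous F -> measurable [set x | a < F x].
Proof.
rewrite (_ : [set x | a < F x] = F @^-1` `]a, +oo[) => [cF|].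
  exact: continuous_measurable_preimage.
by apply/seteqP; split => x /=; rewrite in_itv /= andbT.
Qed.

Section continuous_cdf.
Context d (T : measurableType d) (R : realType) (P : probability T R).
Context (X : {RV P >-> R}) (F : R -> R).
Hypotheses (XF : forall r, cdf X r = (F r)%:E) (cF : continuous F).

Lemma cdf_fun_nondecreasing : {homo F : x y / x <= y}.
Proof. by move=> x y xy; rewrite -lee_fin -!XF cdf_nondecreasing. Qed.

Lemma cdf_fun_ge0 x : 0 <= F x.
Proof. by rewrite -lee_fin -XF cdf_ge0. Qed.

Lemma cdf_fun_le1 x : F x <= 1.
Proof. by rewrite -lee_fin -XF cdf_le1. Qed.

Lemma cdf_fun_surj v : 0 < v < 1 -> exists c, F c = v.
Proof.
move=> /andP[v0 v1].
have FX : cdf X = (fun r => (F r)%:E) by apply/funext.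
have Fy : F x @[x --> +oo] --> (1 : R) by have := cvg_cdfy1 X; rewrite FX => /fine_cvg.
have FNy : F x @[x --> -oo] --> (0 : R) by have := cvg_cdfNy0 X; rewrite FX => /fine_cvg.
have [M1 [_ FM1]] := cvgr_gt 1 Fy v v1.
have [M0 [_ FM0]] := cvgr_lt 0 FNy v v0.
have lo : F (M0 - 1) < v by apply: FM0; lra.
have hi : v < F (M1 + 1) by apply: FM1; lra.
have M01 : M0 - 1 <= M1 + 1.
  by rewrite leNgt; apply/negP => /ltW /cdf_fun_nondecreasing; lra.
have Fv : Num.min (F (M0 - 1)) (F (M1 + 1)) <= v <= Num.max (F (M0 - 1)) (F (M1 + 1)).
  by rewrite ge_min le_max (ltW lo) (ltW hi) orbT.
have [c _ Fc] := IVT M01 (continuous_subspaceT cF) Fv.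
by exists c.
Qed.

Lemma probability_cdf_lt a : 0 < a -> fine (P (X @^-1` [set x | F x < a])) <= a.
Proof.
move=> a0.
have mA : measurable (X @^-1` [set x | F x < a]).
  by apply: measurable_funPTI; exact: measurable_continuous_lt.
have [a1|a1] := leP 1 a; first by have /andP[_ /le_trans] := probability_fine01 P mA; exact.
have [c Fc] : exists c, F c = a by apply: cdf_fun_surj; rewrite a0 a1.
subst a; rewrite -lee_fin fineK ?fin_num_measure // -XF /cdf /distribution /pushforward /=.
apply: le_measure; rewrite ?inE //; first by apply: measurable_funPTI.
move=> w /= FXc; rewrite in_itv /= leNgt; apply: contraTN FXc.
by move=> /ltW/cdf_fun_nondecreasing; rewrite -leNgt.
Qed.

Lemma probability_cdf_gt b : 0 < b < 1 ->
  fine (P (X @^-1` [set x | b < F x])) <= 1 - b.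
Proof.
move=> b01; have [c <-] := cdf_fun_surj b01.
have mA : measurable (X @^-1` [set x | F c < F x]).
  by apply: measurable_funPTI; exact: measurable_continuous_gt.
rewrite -lee_fin fineK ?fin_num_measure // EFinB -XF -ccdf_1_cdf.
rewrite /ccdf /distribution /pushforward /=.
apply: le_measure; rewrite ?inE //; first by apply: measurable_funPTI.
move=> w /= cFX; rewrite in_itv /= andbT ltNge; apply: contraTN cFX.
by move=> /cdf_fun_nondecreasing; rewrite -leNgt.
Qed.

End continuous_cdf.

Section sorted_count.
Context {T : Type} (x0 : T) (leT : rel T) (leT_tr : transitive leT).

Lemma sorted_nth_count (s : seq T) (p : pred T) (j : nat) :
  sorted leT s -> (forall x y, leT x y -> p y -> p x) -> (0 < j <= size s)%N ->
  p (nth x0 s j.-1) = (j <= count p s)%N.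
Proof.
move=> + p_down; elim: s j => [|x s IH] [|j] //= x_s j_s.
have x_le := order_path_min leT_tr x_s; have s_sorted := path_sorted x_s.
have no_p : ~~ p x -> count p s = 0%N.
  move=> npx; apply/eqP; rewrite -leqn0 leqNgt -has_count -all_predC.
  by apply: sub_all x_le => y xy; apply: contra npx; exact: p_down.
case: j j_s => [|j] j_s /=.
  by case: (boolP (p x)) => [_|/no_p ->].
case: (boolP (p x)) => [px|/[dup] npx /no_p ->].
  by rewrite (IH j.+1 s_sorted j_s) add1n.
apply/negbTE; apply: contra npx; apply: p_down.
exact: (all_nthP x0 x_le).
Qed.

End sorted_count.

Section order_statistics.
Context d (T : measurableType d) (R : realType) (P : probability T R).
Context (n : nat) (X : 'I_n -> {RV P >-> R}).

Lemma size_sorted_sample w : size (sorted_sample X w) = n.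
Proof. by rewrite size_sort size_map size_enum_ord. Qed.

Lemma sorted_sample_sorted w : sorted <=%R (sorted_sample X w).
Proof. exact: (sort_sorted le_total). Qed.

Lemma count_sorted_sample w (p : pred R) :
  count p (sorted_sample X w) = (\sum_(i < n) (p (X i w) : nat))%N.
Proof.
rewrite count_sort count_map -sumn_count sumnE big_map.
by rewrite big_enum_cond /= big_mkcond.
Qed.

Lemma order_stat_lt_count (G : R -> R) (a : R) (j : nat) w :
  {homo G : x y / x <= y} -> (0 < j <= n)%N ->
  (G (order_stat X j w) < a) = (j <= \sum_(i < n) ((G (X i w) < a)%R : nat))%N.
Proof.
move=> G_mono j_n; rewrite -(count_sorted_sample w (fun x => G x < a)).
apply: (sorted_nth_count _ le_trans (sorted_sample_sorted w)).
  by move=> x y /G_mono; exact: le_lt_trans.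
by rewrite size_sorted_sample.
Qed.

Lemma order_stat_gt_count (G : R -> R) (b : R) (j : nat) w :
  {homo G : x y / x <= y} -> (0 < j <= n)%N ->
  (b < G (order_stat X j w)) =
  (n - j.-1 <= \sum_(i < n) ((b < G (X i w))%R : nat))%N.
Proof.
move=> G_mono j_n; rewrite -(count_sorted_sample w (fun x => b < G x)) ltNge.
have cntC : (count (fun x => (G x <= b)%R) (sorted_sample X w)
             + count (fun x => (b < G x)%R) (sorted_sample X w) = n)%N.
  rewrite -[RHS](size_sorted_sample w) -(count_predC (fun x => (G x <= b)%R)).
  by congr (_ + _); apply: eq_count => x; rewrite /= ltNge.
rewrite /order_stat (sorted_nth_count (T := R) (p := fun x => (G x <= b)%R) 0
          le_trans (sorted_sample_sorted w)).
- by rewrite -ltnNge; apply/idP/idP; lia.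
- by move=> x y /G_mono; exact: le_trans.
- by rewrite size_sorted_sample.
Qed.

End order_statistics.

Section order_stat_tails.
Context d (T : measurableType d) (R : realType) (P : probability T R).
Context (n : nat) (X : 'I_n -> {RV P >-> R}) (F : R -> R).
Hypotheses (n_gt0 : (0 < n)%N) (X_indep : mutually_independent X).
Hypotheses (XF : forall i r, cdf (X i) r = (F r)%:E) (cF : continuous F).

Let F_mono : {homo F : x y / x <= y}.
Proof. exact: cdf_fun_nondecreasing (XF (Ordinal n_gt0)). Qed.

Lemma F_order_stat01 j w : 0 <= F_order_stat X F j w <= 1.
Proof.
rewrite /F_order_stat; case: ifP => _; first by rewrite lexx ler01.
case: ifP => _; first by rewrite ler01 lexx.
by rewrite (cdf_fun_ge0 (XF (Ordinal n_gt0))) (cdf_fun_le1 (XF (Ordinal n_gt0))).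
Qed.

Lemma F_order_statE j w : (0 < j <= n)%N ->
  F_order_stat X F j w = F (order_stat X j w).
Proof.
by case/andP=> j0 jn; rewrite /F_order_stat gtn_eqF // ltn_eqF // ltnS.
Qed.

Let n_neq0 : n%:R != 0 :> R.
Proof. by rewrite pnatr_eq0 -lt0n. Qed.

Let n1_neq0 : n%:R + 1 != 0 :> R.
Proof. by rewrite natr1 pnatr_eq0. Qed.

Lemma F_order_stat_lower_tail (k : nat) (eps : R) : (k <= n)%N -> 0 < eps ->
  (P [set w | F_order_stat X F k w < k%:R / (n%:R + 1) - eps]%R
     <= (expR (- (2 * n%:R) * (eps + k%:R / (n%:R * (n%:R + 1))) ^+ 2))%:E)%E.
Proof.
move=> kn eps0; set a := k%:R / (n%:R + 1) - eps.
have [a_le0|a_gt0] := leP a 0.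
  rewrite (_ : [set w | _] = set0) ?measure0 ?lee_fin ?expR_ge0 //.
  apply/seteqP; split => w //= /lt_le_trans/(_ a_le0).
  by have /andP[] := F_order_stat01 k w; lra.
have k_n : (0 < k <= n)%N.
  rewrite kn andbT lt0n; apply: contraTneq a_gt0 => k0.
  by rewrite /a k0 mul0r -leNgt; lra.
rewrite [X in P X](_ : _ =
    [set w | (k <= \sum_(i < n) ((F (X i w) < a)%R : nat))%N]); last first.
  by apply/seteqP; split => w; rewrite /= F_order_statE // order_stat_lt_count.
apply: (hoeffding_independent_count X_indep (measurable_continuous_lt a cF)
          (tau := eps + k%:R / (n%:R * (n%:R + 1)))).
- by move=> i; exact: probability_cdf_lt (XF i) cF _ a_gt0.
- apply: addr_ge0 (ltW eps0) _.
  by apply: divr_ge0 => //; apply: mulr_ge0 => //; apply: addr_ge0.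
- by unfold a; field; rewrite n_neq0 n1_neq0.
Qed.

Lemma F_order_stat_upper_tail (k : nat) (eps : R) : (k <= n)%N -> 0 < eps ->
  (P [set w | (k%:R + 1) / (n%:R + 1) + eps < F_order_stat X F k.+1 w]%R
     <= (expR (- (2 * n%:R) * (eps + (n%:R - k%:R) / (n%:R * (n%:R + 1))) ^+ 2))%:E)%E.
Proof.
move=> kn eps0; set b := (k%:R + 1) / (n%:R + 1) + eps.
have b_gt0 : 0 < b by rewrite /b; apply: ltr_pwDr eps0 _; apply: divr_ge0; apply: addr_ge0.
have [b_ge1|b_lt1] := leP 1 b.
  rewrite (_ : [set w | _] = set0) ?measure0 ?lee_fin ?expR_ge0 //.
  apply/seteqP; split => w //= /(le_lt_trans b_ge1).
  by have /andP[] := F_order_stat01 k.+1 w; lra.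
have k_lt_n : (k < n)%N.
  rewrite ltn_neqAle kn andbT; apply/negP => /eqP kE; move: b_lt1.
  by rewrite /b kE divff // ?n1_neq0; lra.
rewrite [X in P X](_ : _ =
    [set w | (n - k <= \sum_(i < n) ((b < F (X i w))%R : nat))%N]); last first.
  by apply/seteqP; split => w; rewrite /= F_order_statE // order_stat_gt_count.
apply: (hoeffding_independent_count X_indep (measurable_continuous_gt b cF)
          (tau := eps + (n%:R - k%:R) / (n%:R * (n%:R + 1)))).
- by move=> i; apply: (probability_cdf_gt (XF i) cF); rewrite b_gt0 b_lt1.
- apply: addr_ge0 (ltW eps0) _; apply: divr_ge0; last by apply: mulr_ge0 => //; apply: addr_ge0.
  by rewrite subr_ge0 ler_nat.
- by rewrite natrB // /b; field; rewrite n_neq0 n1_neq0.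
Qed.

End order_stat_tails.

Theorem mainTheorem5 (d : measure_display) (T : measurableType d) (R : realType)
  (P : probability T R) (n : nat) (X : 'I_n -> {RV P >-> R}) (F : R -> R)
  (k : nat) (eps : R) :
  (1 <= n)%N -> (k <= n)%N ->
  mutually_independent X ->
  (forall i r, cdf (X i) r = (F r)%:E) ->
  continuous F ->
  0 < eps ->
  let y0 := fun w => 1 - F_order_stat X F k w in
  let z0 := fun w => 1 - F_order_stat X F k.+1 w in
  let y1 := fun w => F_order_stat X F k.+1 w in
  let z1 := fun w => F_order_stat X F k w in
  let nr : R := n%:R in
  let kr : R := k%:R in
  [/\ (P [set w | y0 w > (nr - kr + 1) / (nr + 1) + eps]%R
        <= (expR (- (2 * nr) * (eps + kr / (nr * (nr + 1))) ^+ 2)%R)%:E)%E,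
      (P [set w | z0 w < (nr - kr) / (nr + 1) - eps]%R
        <= (expR (- (2 * nr) * (eps + (nr - kr) / (nr * (nr + 1))) ^+ 2)%R)%:E)%E,
      (P [set w | y1 w > (kr + 1) / (nr + 1) + eps]%R
        <= (expR (- (2 * nr) * (eps + (nr - kr) / (nr * (nr + 1))) ^+ 2)%R)%:E)%E &
      (P [set w | z1 w < kr / (nr + 1) - eps]%R
        <= (expR (- (2 * nr) * (eps + kr / (nr * (nr + 1))) ^+ 2)%R)%:E)%E].
Proof.
move=> n_gt0 kn X_indep XF cF eps0 y0 z0 y1 z1 nr kr.
have lower := F_order_stat_lower_tail n_gt0 X_indep XF cF kn eps0.
have upper := F_order_stat_upper_tail n_gt0 X_indep XF cF kn eps0.
have n1_neq0 : nr + 1 != 0 by rewrite natr1 pnatr_eq0.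
have y0E : [set w | y0 w > (nr - kr + 1) / (nr + 1) + eps] =
           [set w | F_order_stat X F k w < kr / (nr + 1) - eps].
  have -> : (nr - kr + 1) / (nr + 1) = 1 - kr / (nr + 1) by field.
  by apply/seteqP; split => w /=; rewrite /y0; lra.
have z0E : [set w | z0 w < (nr - kr) / (nr + 1) - eps] =
           [set w | (kr + 1) / (nr + 1) + eps < F_order_stat X F k.+1 w].
  have -> : (nr - kr) / (nr + 1) = 1 - (kr + 1) / (nr + 1) by field.
  by apply/seteqP; split => w /=; rewrite /z0; lra.
by split; rewrite ?y0E ?z0E.
Qed.
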